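(* Let $\omega$ be a primitive third root of unity, $S=\mathbb{C}\langle x,y,z\rangle/(x^2,y^2,z^2)$, and for $t\in\mathbb{C}^*$ let $T_t$ be the quotient of $S$ by the two-sided ideal generated by $(zxy+\omega xyz+\omega^2 yzx)+t(yxz+\omega zyx+\omega^2 xzy)$ and $(zxy+\omega^2 xyz+\omega yzx)+t(yxz+\omega^2 zyx+\omega xzy)$; let $M_t=T_t/(g_t)$ with $g_t=(zxy+xyz+yzx)+t(yxz+zyx+xzy)$. If $-t$ is a primitive $n$th root of unity, then $M_t$ is a finite module over its center.
   Context: Grading: $\deg x=\deg y=\deg z=1$. *)

From HB Require Import structures.
From mathcomp Require Import all_boot all_order all_algebra.
From mathcomp Require Import reals.
From mathcomp Require Import complex.
From mathcomp.multinomials Require Import monalg.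
Set Implicit Arguments. Unset Strict Implicit. Unset Printing Implicit Defensive.
Import GRing.Theory.
Local Open Scope ring_scope.

Definition freeAlg (R : realType) := {malg (complex R)[{fmonom 'I_3}]}.

Definition gen (R : realType) (i : 'I_3) : freeAlg R := << fmu i >>.
Definition vx (R : realType) : freeAlg R := gen R 0.
Definition vy (R : realType) : freeAlg R := gen R 1.
Definition vz (R : realType) : freeAlg R := gen R 2.

Definition sc (R : realType) (c : complex R) : freeAlg R := c *: (1 : freeAlg R).

Inductive in_ideal (A : pzRingType) (G : A -> Prop) : A -> Prop :=
| ideal_gen g : G g -> in_ideal G g
| ideal_0 : in_ideal G 0
| ideal_add a b : in_ideal G a -> in_ideal G b -> in_ideal G (a + b)
| ideal_mull c a : in_ideal G a -> in_ideal G (c * a)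
| ideal_mulr a c : in_ideal G a -> in_ideal G (a * c).

(* The quotient A/I (I = two-sided ideal generated by G) is a finite module
   over its center: there are finitely many m_1..m_k in A such that every
   class in A/I is a combination sum c_i m_i with each c_i central in A/I. *)
Definition central_mod (A : pzRingType) (G : A -> Prop) (c : A) : Prop :=
  forall b : A, in_ideal G (c * b - b * c).

Definition quotient_finite_over_center (A : pzRingType) (G : A -> Prop) : Prop :=
  exists ms : seq A, forall a : A,
    exists cs : seq A,
      size cs = size ms /\
      (forall c, c \in cs -> central_mod G c) /\
      in_ideal G (a - \sum_(i < size ms) cs`_i * ms`_i).

Section Rels.
Variables (R : realType) (w t : complex R).
Local Notation x := (vx R). Local Notation y := (vy R). Local Notation z := (vz R).
Local Notation S := (@sc R).

Definition rel_f1 : freeAlg R :=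
  (z * x * y + S w * (x * y * z) + S (w ^+ 2) * (y * z * x))
  + S t * (y * x * z + S w * (z * y * x) + S (w ^+ 2) * (x * z * y)).
Definition rel_f2 : freeAlg R :=
  (z * x * y + S (w ^+ 2) * (x * y * z) + S w * (y * z * x))
  + S t * (y * x * z + S (w ^+ 2) * (z * y * x) + S w * (x * z * y)).
Definition rel_g : freeAlg R :=
  (z * x * y + x * y * z + y * z * x) + S t * (y * x * z + z * y * x + x * z * y).

(* defining relations of M_t = T_t/(g_t), T_t = S/(f1,f2), S = C<x,y,z>/(x^2,y^2,z^2) *)
Definition M_rels (r : freeAlg R) : Prop :=
  r = x * x \/ r = y * y \/ r = z * z \/ r = rel_f1 \/ r = rel_f2 \/ r = rel_g.
End Rels.

From HB Require Import structures.
From mathcomp Require Import all_boot all_order all_algebra.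
From mathcomp Require Import reals complex ring zify.
From mathcomp.multinomials Require Import monalg.
Import GRing.Theory.
Local Open Scope ring_scope.
Set Implicit Arguments. Unset Strict Implicit. Unset Printing Implicit Defensive.

(* Solving the three cubic relations for their discrete Fourier components in w gives
   zxy = q yxz, xyz = q zyx and yzx = q xzy with q = -t, so abc = q^(+-1) cba for any three
   distinct letters, and q^n = 1.  Together with x^2 = y^2 = z^2 = 0 this lets one exchange the
   letters in positions i and i + 2 of any word up to a scalar (when the three letters involved
   are not distinct, the exchange is trivial or the word contains a square and vanishes).  Hence the letters in the even
   positions and those in the odd positions of a word may be permuted independently.  Moving the
   third letter through (ab)^n costs q^(+-n) = 1, so (ab)^n + (ba)^n is central for a <> b.  In a
   word of length at least 6n + 2 some letter a fills n + 1 even positions and some letter b fills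
   n + 1 odd ones; gathering them at the front yields either a square or (ab)^n a u, which is
   ((ab)^n + (ba)^n) a u up to a word containing aa.  So the words of length at most 6n + 1 span
   M_t over its center. *)

Section Sequences.
Variable T : Type.
Implicit Types (a b x y : T) (p q s : seq T).

Definition alternation a b m : seq T := flatten (nseq m [:: a; b]).

Lemma alternationS a b m : alternation a b m.+1 = a :: b :: alternation a b m.
Proof. by []. Qed.

Lemma alternationSr a b m : alternation a b m.+1 = alternation a b m ++ [:: a; b].
Proof. by elim: m => //= m IH; rewrite alternationS IH. Qed.

Lemma alternation_shift a b m : a :: alternation b a m = alternation a b m ++ [:: a].
Proof. by elim: m a b => //= m IH a b; rewrite !alternationS IH. Qed.

Definition weave p q : seq T := flatten [seq [:: xy.1; xy.2] | xy <- zip p q].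

Lemma size_weave p q : size (weave p q) = (minn (size p) (size q)).*2.
Proof. by elim: p q => [|x p IH] [|y q] //=; rewrite ?min0n ?minn0 // IH minnSS. Qed.

Lemma weave_cons x y p q : weave (x :: p) (y :: q) = x :: y :: weave p q.
Proof. by []. Qed.

Lemma weave_nseq k x y p q :
  weave (nseq k x ++ p) (nseq k y ++ q) = alternation x y k ++ weave p q.
Proof. by elim: k => //= k IH; rewrite weave_cons IH. Qed.

Lemma weave_decomposition s : exists p q r,
  [/\ s = weave p q ++ r, size p = size q & (size s <= (size p).*2.+1)%N].
Proof.
have [m] := ubnP (size s); elim: m s => // m IH [|x [|y s]] /= size_s.
- by exists [::], [::], [::].
- by exists [::], [::], [:: x].
have [|p [q [r [-> eq_pq le_s]]]] := IH s; first by rewrite -ltnS ltnW.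
by exists (x :: p), (y :: q), r; split; rewrite //= ?eq_pq // doubleS !ltnS.
Qed.
End Sequences.

Section Permutations.
Variable T : eqType.

Lemma perm_swap_ind (P : seq T -> Prop) :
  (forall u a b v, P (u ++ b :: a :: v) -> P (u ++ a :: b :: v)) ->
  forall s t, perm_eq s t -> P t -> P s.
Proof.
have move_front (Q : seq T -> Prop) x u v :
    (forall u a b v, Q (u ++ b :: a :: v) -> Q (u ++ a :: b :: v)) ->
    Q (u ++ x :: v) -> Q (x :: u ++ v).
  elim: u Q => //= y u IH Q Qswap Qyu.
  apply: (Qswap [::]); apply: (IH (fun s => Q (y :: s))) => // u' a b v'.
  exact: (Qswap (y :: u')).
move=> Pswap s; elim: s P Pswap => [|x s IH] P Pswap t.
  by rewrite perm_sym => /perm_nilP ->.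
move=> eq_st Pt; have t_x : x \in t by rewrite -(perm_mem eq_st) mem_head.
move: eq_st Pt; case/splitPr: t_x => u v.
rewrite perm_sym -[x :: v]cat1s perm_catCA perm_cons perm_sym => eq_s Puv.
apply: (IH (fun s => P (x :: s))) eq_s _; last exact: move_front.
by move=> u' a b v'; apply: (Pswap (x :: u')).
Qed.

Lemma perm_nseq_cat (s : seq T) x k : (k <= count_mem x s)%N ->
  exists s', perm_eq s (nseq k x ++ s').
Proof.
elim: k s => [|k IH] s le_k; first by exists s.
have s_x : x \in s by rewrite -has_pred1 has_count (leq_trans _ le_k).
have [|s' eq_s'] := IH (rem x s).
  by rewrite count_mem_rem eqxx subn1 -ltnS prednK ?(leq_trans _ le_k).
by exists s'; rewrite (perm_trans (perm_to_rem s_x)) //= perm_cons.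
Qed.
End Permutations.

Lemma pigeonhole_count (T : finType) (s : seq T) m :
  (#|T| * m < size s)%N -> exists x, (m < count_mem x s)%N.
Proof.
have sum_count : (\sum_(x : T) count_mem x s)%N = size s.
  elim: s => [|y s IH]; first by rewrite big1.
  rewrite big_split /= IH (bigD1 y) //= eqxx big1 // => x.
  by rewrite eq_sym => /negbTE ->.
move=> lt_s; case: (pickP (fun x => m < count_mem x s)%N) => [x lt_x|small].
  by exists x.
suff : (size s <= #|T| * m)%N by rewrite leqNgt lt_s.
by rewrite -sum_count -sum_nat_const leq_sum // => x _; rewrite leqNgt small.
Qed.

Section IdealCongruence.
Variables (T : pzRingType) (G : T -> Prop).
Local Notation I := (in_ideal G).

Definition eqmod (a b : T) := I (a - b).
Local Notation "a ≡ b" := (eqmod a b) (at level 70, no associativity).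

Lemma in_idealN a : I a -> I (- a).
Proof. by move=> Ia; rewrite -mulN1r; apply: ideal_mull. Qed.

Lemma eqmod_refl a : a ≡ a.
Proof. by rewrite /eqmod subrr; apply: ideal_0. Qed.

Lemma eqmod_sym a b : a ≡ b -> b ≡ a.
Proof. by move=> ab; rewrite /eqmod -opprB; apply: in_idealN. Qed.

Lemma eqmod_trans b a c : a ≡ b -> b ≡ c -> a ≡ c.
Proof. by move=> ab bc; rewrite /eqmod -(subrKA b); apply: ideal_add. Qed.

Lemma eqmodD a b c d : a ≡ b -> c ≡ d -> a + c ≡ b + d.
Proof. by move=> ab cd; rewrite /eqmod opprD addrACA; apply: ideal_add. Qed.

Lemma eqmodMl c a b : a ≡ b -> c * a ≡ c * b.
Proof. by rewrite /eqmod -mulrBr; apply: ideal_mull. Qed.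

Lemma eqmodMr c a b : a ≡ b -> a * c ≡ b * c.
Proof. by rewrite /eqmod -mulrBl; apply: ideal_mulr. Qed.

Lemma eqmod_commM c x y : c * x ≡ x * c -> c * y ≡ y * c -> c * (x * y) ≡ x * y * c.
Proof.
move=> cx cy; rewrite mulrA; apply: eqmod_trans (eqmodMr y cx) _.
by rewrite -!mulrA; apply: eqmodMl.
Qed.

Lemma central_mod_nat k : central_mod G k%:R.
Proof. by move=> b; rewrite mulr_natl mulr_natr subrr; apply: ideal_0. Qed.

Lemma central_modM a b : central_mod G a -> central_mod G b -> central_mod G (a * b).
Proof.
move=> ca cb x; rewrite -mulrA; apply: eqmod_trans (eqmodMl a (cb x)) _.
by rewrite !mulrA; apply: eqmodMr (ca x).
Qed.

Lemma central_modD a b : central_mod G a -> central_mod G b -> central_mod G (a + b).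
Proof. by move=> ca cb x; rewrite mulrDr mulrDl; apply: eqmodD. Qed.

Definition center_span (ms : seq T) (a : T) :=
  exists2 f : nat -> T, forall i, central_mod G (f i) &
    a ≡ \sum_(i < size ms) f i * ms`_i.

Variable ms : seq T.

Lemma center_span_mem m : m \in ms -> center_span ms m.
Proof.
move=> ms_m; exists (fun i => (i == index m ms)%:R) => [i|]; first exact: central_mod_nat.
rewrite (bigD1 (Ordinal (etrans (index_mem m ms) ms_m))) //= eqxx mul1r nth_index // big1 ?addr0.
  exact: eqmod_refl.
by move=> i /negbTE ne_i; rewrite -val_eqE /= in ne_i; rewrite ne_i mul0r.
Qed.

Lemma center_span0 : center_span ms 0.
Proof.
exists (fun=> 0) => [i|]; first by rewrite -(mulr0n 1); apply: central_mod_nat.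
by rewrite big1 => [|i _]; [apply: eqmod_refl | rewrite mul0r].
Qed.

Lemma center_spanD a b : center_span ms a -> center_span ms b -> center_span ms (a + b).
Proof.
move=> [f cf af] [g cg bg]; exists (fun i => f i + g i) => [i|].
  exact: central_modD.
by under eq_bigr do rewrite mulrDl; rewrite big_split; apply: eqmodD.
Qed.

Lemma center_spanMl c a : central_mod G c -> center_span ms a -> center_span ms (c * a).
Proof.
move=> cc [f cf af]; exists (fun i => c * f i) => [i|]; first exact: central_modM.
by under eq_bigr do rewrite -mulrA; rewrite -mulr_sumr; apply: eqmodMl.
Qed.

Lemma center_span_eqmod a b : a ≡ b -> center_span ms b -> center_span ms a.
Proof. by move=> ab [f cf bf]; exists f => //; apply: eqmod_trans bf. Qed.

Lemma center_span_finite : (forall a, center_span ms a) -> quotient_finite_over_center G.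
Proof.
move=> span; exists ms => a; have [f cf af] := span a.
exists (mkseq f (size ms)); split; [by rewrite size_mkseq | split].
  by move=> c /mapP [i _ ->]; apply: cf.
by under eq_bigr do rewrite nth_mkseq //.
Qed.
End IdealCongruence.

Section FreeAlgebra.
Variable R : realType.
Local Notation A := (freeAlg R).

Definition word (s : seq 'I_3) : A := \prod_(i <- s) gen R i.

Lemma word_cat s1 s2 : word (s1 ++ s2) = word s1 * word s2.
Proof. exact: big_cat. Qed.

Lemma word_cons i s : word (i :: s) = gen R i * word s.
Proof. exact: big_cons. Qed.

Lemma word1 i : word [:: i] = gen R i.
Proof. exact: big_seq1. Qed.

Lemma monomial_word (s : seq 'I_3) : << FMonom s >> = word s.
Proof.
elim: s => [|i s IH].
  by rewrite /word big_nil; congr << _ >>; apply: val_inj; rewrite /= fm1.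
have -> : FMonom (i :: s) = mmul (fmu i) (FMonom s) by apply: val_inj; rewrite /= fmM fmU.
by rewrite word_cons -IH malgM_def fgmulUU mulr1.
Qed.

Lemma freeAlg_scalarC (c : complex R) (a : A) : a * c%:MP = c%:MP * a.
Proof.
rewrite (monalgE a) mulr_suml mulr_sumr; apply: eq_bigr => k _.
by rewrite !malgM_def !fgmulUU mulm1 mul1m mulrC.
Qed.

Lemma freeAlg_scalerAr (c : complex R) (a b : A) : a * (c *: b) = c *: (a * b).
Proof. by rewrite -!mul_malgC mulrA freeAlg_scalarC mulrA. Qed.

Lemma freeAlg_ind (P : A -> Prop) : P 0 -> (forall a b, P a -> P b -> P (a + b)) ->
  (forall c s, P (c *: word s)) -> forall a, P a.
Proof.
move=> P0 PD PW a; rewrite (monalgE a); apply: big_ind => // k _.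
suff -> : << a@_k *g k >> = a@_k *: word k by [].
by rewrite -monomial_word fmK -mul_malgC malgM_def fgmulUU mulr1 mul1m.
Qed.

Variable G : A -> Prop.
Local Notation "a ≡ b" := (eqmod G a b) (at level 70, no associativity).

Lemma in_idealZ c a : in_ideal G a -> in_ideal G (c *: a).
Proof. by rewrite -mul_malgC; apply: ideal_mull. Qed.

Lemma eqmodZ c a b : a ≡ b -> c *: a ≡ c *: b.
Proof. by rewrite /eqmod -scalerBr; apply: in_idealZ. Qed.

Lemma central_mod_gen c : (forall i, c * gen R i ≡ gen R i * c) -> central_mod G c.
Proof.
move=> c_gen; apply: (freeAlg_ind (P := fun b => c * b ≡ b * c)) => [|a b ca cb|k s].
- by rewrite mul0r mulr0; apply: eqmod_refl.
- by rewrite mulrDr mulrDl; apply: eqmodD.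
rewrite freeAlg_scalerAr -scalerAl; apply: eqmodZ; elim: s => [|i s IH].
  by rewrite /word big_nil mulr1 mul1r; apply: eqmod_refl.
by rewrite word_cons; apply: (eqmod_commM (c_gen i) IH).
Qed.

Lemma eqmod_word_ctx u v s s' k : word s ≡ k *: word s' ->
  word (u ++ s ++ v) ≡ k *: word (u ++ s' ++ v).
Proof.
move=> ss'; rewrite !word_cat -freeAlg_scalerAr scalerAl.
by apply: eqmodMl; apply: eqmodMr.
Qed.
End FreeAlgebra.

Section WordReduction.
Variables (R : realType) (G : freeAlg R -> Prop) (n : nat).
Local Notation word := (@word R).
Local Notation "a ≡ b" := (eqmod G a b) (at level 70, no associativity).

Hypothesis n_gt0 : (0 < n)%N.
Hypothesis gen_sq : forall i, in_ideal G (gen R i * gen R i).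
Hypothesis word_rev : forall a b c : 'I_3, a != b -> b != c -> a != c ->
  exists2 k, k ^+ n = 1 & word [:: a; b; c] ≡ k *: word [:: c; b; a].

Lemma word_square u a v : word (u ++ a :: a :: v) ≡ 0.
Proof.
rewrite /eqmod subr0 word_cat !word_cons (mulrA (gen R a)) mulrA.
by apply: ideal_mulr; apply: ideal_mull.
Qed.

Lemma word_alternation_square u a b m v :
  word (u ++ alternation b a m.+1 ++ a :: v) ≡ 0.
Proof.
suff -> : u ++ alternation b a m.+1 ++ a :: v = (u ++ alternation b a m ++ [:: b]) ++ a :: a :: v.
  exact: word_square.
by rewrite alternationSr -!catA.
Qed.

Definition alternation_sum a b := word (alternation a b n) + word (alternation b a n).

Lemma alternation_sumC a b : alternation_sum a b = alternation_sum b a.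
Proof. exact: addrC. Qed.

Lemma word_bubble a b c k m : word [:: c; a; b] ≡ k *: word [:: b; a; c] ->
  word (c :: alternation a b m) ≡ k ^+ m *: word (alternation b a m ++ [:: c]).
Proof.
move=> cab; elim: m => [|m IH]; first by rewrite scale1r; apply: eqmod_refl.
rewrite alternationS exprS -scalerA.
apply: eqmod_trans (eqmod_word_ctx [::] (alternation a b m) cab) _; apply: eqmodZ.
by have := eqmod_word_ctx [:: b; a] [::] IH; rewrite !cats0.
Qed.

Lemma alternation_sum_gen_first a b :
  alternation_sum a b * gen R a ≡ gen R a * alternation_sum a b.
Proof.
rewrite /alternation_sum mulrDl mulrDr -word1 -!word_cat /= -alternation_shift addrC.
apply: eqmodD; last exact: eqmod_refl.
rewrite -(prednK n_gt0); apply: eqmod_trans (word_alternation_square [::] _ _ _ [::]) _.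
by apply: eqmod_sym; rewrite alternationS; apply: (word_square [::]).
Qed.

Lemma alternation_sum_gen_third a b c : a != b -> c != a -> c != b ->
  alternation_sum a b * gen R c ≡ gen R c * alternation_sum a b.
Proof.
move=> ab ca cb; have [k1 k1n cab] := word_rev ca ab cb.
have [k2 k2n cba] := word_rev cb (contra_neq esym ab) ca.
rewrite /alternation_sum mulrDl mulrDr -word1 -!word_cat /= addrC.
apply: eqmod_sym; apply: eqmodD.
  by have := word_bubble n cab; rewrite k1n scale1r.
by have := word_bubble n cba; rewrite k2n scale1r.
Qed.

Lemma alternation_sum_central a b : a != b -> central_mod G (alternation_sum a b).
Proof.
move=> ab; apply: central_mod_gen => i.
have [-> | ia] := eqVneq i a; first exact: alternation_sum_gen_first.
have [-> | ib] := eqVneq i b; first by rewrite alternation_sumC; apply: alternation_sum_gen_first.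
exact: alternation_sum_gen_third.
Qed.

Lemma word_alternation_split a b u v : a != b ->
  word (u ++ alternation a b n ++ a :: v) ≡ alternation_sum a b * word (u ++ a :: v).
Proof.
move=> ab; apply: eqmod_sym; rewrite word_cat mulrA.
apply: eqmod_trans (eqmodMr _ (alternation_sum_central ab (word u))) _.
rewrite -mulrA /alternation_sum mulrDl mulrDr -!word_cat -[X in _ ≡ X]addr0.
apply: eqmodD; first exact: eqmod_refl.
by rewrite -(prednK n_gt0); apply: word_alternation_square.
Qed.

Section CentralSubmodule.
Variable Q : freeAlg R -> Prop.
Hypotheses (Q0 : Q 0) (QD : forall x y, Q x -> Q y -> Q (x + y)).
Hypothesis QM : forall c x, central_mod G c -> Q x -> Q (c * x).
Hypothesis Q_eqmod : forall x y, x ≡ y -> Q y -> Q x.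

Lemma QZ k x : Q x -> Q (k *: x).
Proof.
rewrite -mul_malgC; apply: QM => b.
by rewrite freeAlg_scalarC subrr; apply: ideal_0.
Qed.

Lemma Q_square u a v : Q (word (u ++ a :: a :: v)).
Proof. exact: Q_eqmod (word_square u a v) Q0. Qed.

(* No hypothesis on a, b, c is needed: if they are not distinct, the two words coincide or both
   contain a square. *)
Lemma Q_swap u a b c v :
  Q (word (u ++ c :: b :: a :: v)) -> Q (word (u ++ a :: b :: c :: v)).
Proof.
have [<- _ | ab] := eqVneq a b; first exact: Q_square.
have [<- _ | bc] := eqVneq b c; first by rewrite -cat_rcons; apply: Q_square.
have [<- // | ac] := eqVneq a c.
have [k _ abc] := word_rev ab bc ac.
by move=> Qcba; apply: Q_eqmod (eqmod_word_ctx u v abc) (QZ k Qcba).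
Qed.

Lemma Q_weave_swapl pre q suf u a b v : (size (u ++ a :: b :: v) <= size q)%N ->
  Q (word (pre ++ weave (u ++ b :: a :: v) q ++ suf)) ->
  Q (word (pre ++ weave (u ++ a :: b :: v) q ++ suf)).
Proof.
elim: u pre q => [|x u IH] pre q.
  by case: q => [|y [|y' q]] //= _; apply: Q_swap.
case: q => [|y q] //= size_le.
by have := IH (pre ++ [:: x; y]) q size_le; rewrite -!catA; apply.
Qed.

Lemma Q_weave_swapr pre p suf u a b v : (size (u ++ a :: b :: v) <= size p)%N ->
  Q (word (pre ++ weave p (u ++ b :: a :: v) ++ suf)) ->
  Q (word (pre ++ weave p (u ++ a :: b :: v) ++ suf)).
Proof.
elim: u pre p => [|x u IH] pre p.
  case: p => [|y [|y' p]] //= _.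
  by have := @Q_swap (rcons pre y) a y' b (weave p v ++ suf); rewrite -!cat_rcons; apply.
case: p => [|y p] //= size_le.
by have := IH (pre ++ [:: y; x]) p size_le; rewrite -!catA; apply.
Qed.

Lemma Q_weave_perm pre p q p' q' suf : size p = size q -> perm_eq p p' -> perm_eq q q' ->
  Q (word (pre ++ weave p' q' ++ suf)) -> Q (word (pre ++ weave p q ++ suf)).
Proof.
move=> size_pq pp' qq' Qp'q'.
have size_p' : size p' = size q by rewrite -(perm_size pp').
pose Pl r := size r = size q -> Q (word (pre ++ weave r q ++ suf)).
pose Pr r := size r = size p' -> Q (word (pre ++ weave p' r ++ suf)).
have Pl_swap u a b v : Pl (u ++ b :: a :: v) -> Pl (u ++ a :: b :: v).
  move=> Qba size_ab; apply: Q_weave_swapl; first by rewrite size_ab.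
  by apply: Qba; rewrite -size_ab !size_cat.
have Pr_swap u a b v : Pr (u ++ b :: a :: v) -> Pr (u ++ a :: b :: v).
  move=> Qba size_ab; apply: Q_weave_swapr; first by rewrite size_ab.
  by apply: Qba; rewrite -size_ab !size_cat.
have Qp'q : Pl p' := fun _ => perm_swap_ind Pr_swap qq' (fun _ => Qp'q') (esym size_p').
exact: (perm_swap_ind (P := Pl) Pl_swap pp' Qp'q size_pq).
Qed.

Lemma Q_long_word s : (6 * n + 1 < size s)%N ->
  (forall s', (size s' < size s)%N -> Q (word s')) -> Q (word s).
Proof.
move=> long Q_shorter; have [p [q [r [def_s size_pq size_s]]]] := weave_decomposition s.
have long_p : (#|'I_3| * n < size p)%N by move: size_s; rewrite card_ord -muln2; lia.
have long_q : (#|'I_3| * n < size q)%N by rewrite -size_pq.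
have [x /perm_nseq_cat [p' pp']] := pigeonhole_count long_p.
have [y /perm_nseq_cat [q' qq']] := pigeonhole_count long_q.
rewrite def_s; apply: (Q_weave_perm (pre := [::]) size_pq pp' qq'); rewrite weave_nseq cat0s.
have [<- | xy] := eqVneq x y; first by rewrite alternationS; apply: (Q_square [::]).
rewrite alternationSr -!catA /=.
apply: Q_eqmod (word_alternation_split [::] _ xy) _.
apply: QM; first exact: alternation_sum_central.
apply: Q_shorter; rewrite def_s; move: (perm_size pp') (perm_size qq').
by rewrite /= !size_cat !size_weave !size_nseq size_pq => -> ->; rewrite !minnn -!muln2; lia.
Qed.

Hypothesis Q_short : forall s, (size s <= 6 * n + 1)%N -> Q (word s).

Lemma Q_word s : Q (word s).
Proof.
have [m lt_sm] := ubnP (size s); elim: m s lt_sm => // m IH s lt_sm.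
have [short | long] := leqP (size s) (6 * n + 1); first exact: Q_short.
by apply: Q_long_word => // s' lt_s's; apply: IH; apply: leq_trans lt_s's lt_sm.
Qed.

Lemma Q_everywhere x : Q x.
Proof. by elim/freeAlg_ind: x => // k s; apply: QZ; apply: Q_word. Qed.
End CentralSubmodule.

Definition short_words (K : nat) : seq (seq 'I_3) := [seq val s | s : K.-bseq 'I_3].

Lemma mem_short_words K s : (size s <= K)%N -> s \in short_words K.
Proof. by move=> le_sK; apply/mapP; exists (Sub s le_sK); rewrite ?mem_enum. Qed.

Lemma word_relations_finite_over_center : quotient_finite_over_center G.
Proof.
pose ms := [seq word s | s <- short_words (6 * n + 1)].
apply: (center_span_finite (ms := ms)) => a.
apply: (Q_everywhere (Q := center_span G ms)) => [|x y|c x|x y|s short_s].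
- exact: center_span0.
- exact: center_spanD.
- exact: center_spanMl.
- exact: center_span_eqmod.
by apply: center_span_mem; apply: map_f; apply: mem_short_words.
Qed.
End WordReduction.

Section CubeRoots.
Variables (K : fieldType) (w : K).
Hypothesis w_prim : 3.-primitive_root w.

Lemma prim3_root_neq1 : w != 1.
Proof. by have := prim_order_dvd w_prim 1; rewrite expr1 => <-. Qed.

Lemma prim3_root_sum : 1 + w + w ^+ 2 = 0.
Proof.
have : (w - 1) * (1 + w + w ^+ 2) = 0.
  by rewrite -(subrr (w ^+ 3)) {2}(prim_expr_order w_prim); ring.
by move/eqP; rewrite mulf_eq0 subr_eq0 (negbTE prim3_root_neq1) => /eqP.
Qed.

Variables (V : lmodType K) (S : V -> Prop).
Hypotheses (SD : forall u v, S u -> S v -> S (u + v)) (SZ : forall k u, S u -> S (k *: u)).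

Lemma cube_root_components a b c :
  S (a + b + c) -> S (a + w *: b + w ^+ 2 *: c) -> S (a + w ^+ 2 *: b + w *: c) ->
  [/\ S a, S b & S c].
Proof.
move=> Sg Sf1 Sf2.
have SB u v : S u -> S v -> S (u - v) by move=> Su Sv; rewrite -scaleN1r; apply/SD/SZ.
have lcD (x y z x' y' z' : K) : (x *: a + y *: b + z *: c) + (x' *: a + y' *: b + z' *: c)
    = (x + x') *: a + (y + y') *: b + (z + z') *: c.
  by rewrite !scalerDl addrACA (addrACA (x *: a)).
have Sa : S a.
  have -> : a = 3%:R^-1 *: ((a + b + c) + (a + w *: b + w ^+ 2 *: c) + (a + w ^+ 2 *: b + w *: c)).
    have -> : a + b + c = 1 *: a + 1 *: b + 1 *: c by rewrite !scale1r.
    rewrite -[a in a + w *: b](scale1r a) -[a in a + w ^+ 2 *: b](scale1r a) !lcD.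
    rewrite prim3_root_sum (addrAC 1 (w ^+ 2)) prim3_root_sum !scale0r !addr0 scalerA.
    by rewrite (_ : 1 + 1 + 1 = 3%:R) ?mulVf ?scale1r ?(prim_root_natf_neq0 w_prim) //; ring.
  by apply: SZ; apply: SD; first apply: SD.
have Sbc : S (b + c) by have := SB _ _ Sg Sa; rewrite addrAC (addrAC a) subrr add0r.
have Sbc' : S (w *: b + w ^+ 2 *: c).
  by have := SB _ _ Sf1 Sa; rewrite addrAC (addrAC a) subrr add0r.
have w_w2 : w - w ^+ 2 != 0.
  rewrite expr2 -{1}[w]mulr1 -mulrBr mulf_neq0 ?(prim_root_eq0 w_prim) //.
  by rewrite subr_eq0 eq_sym prim3_root_neq1.
have Sc : S c.
  have -> : c = (w - w ^+ 2)^-1 *: (w *: (b + c) - (w *: b + w ^+ 2 *: c)).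
    by rewrite [w *: (b + c)]scalerDr opprD addrACA subrr add0r -scalerBl scalerA mulVf ?scale1r.
  by apply/SZ/SB => //; apply: SZ.
by split=> //; have := SB _ _ Sbc Sc; rewrite addrK.
Qed.
End CubeRoots.

Lemma scale_interchange (K : comNzRingType) (V : lmodType K) (x y t : K) (a b c a' b' c' : V) :
  (a + x *: b + y *: c) + t *: (a' + x *: b' + y *: c') =
  (a + t *: a') + x *: (b + t *: b') + y *: (c + t *: c').
Proof. by rewrite !scalerDr !scalerA (mulrC t x) (mulrC t y) addrACA (addrACA a). Qed.

Lemma rel_f_shape (K : comNzRingType) (V : lalgType K) (x y z : V) (a b t : K) :
  (z * x * y + (a *: 1) * (x * y * z) + (b *: 1) * (y * z * x))
    + (t *: 1) * (y * x * z + (a *: 1) * (z * y * x) + (b *: 1) * (x * z * y)) =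
  (z * x * y + t *: (y * x * z)) + a *: (x * y * z + t *: (z * y * x))
    + b *: (y * z * x + t *: (x * z * y)).
Proof. by rewrite -!scalerAl !mul1r scale_interchange. Qed.

Lemma rel_g_shape (K : comNzRingType) (V : lalgType K) (x y z : V) (t : K) :
  (z * x * y + x * y * z + y * z * x) + (t *: 1) * (y * x * z + z * y * x + x * z * y) =
  (z * x * y + t *: (y * x * z)) + (x * y * z + t *: (z * y * x))
    + (y * z * x + t *: (x * z * y)).
Proof. by rewrite -scalerAl mul1r !scalerDr addrACA (addrACA (z * x * y)). Qed.

Lemma ord3_cases (i : 'I_3) : i = 0 \/ i = 1 \/ i = 2.
Proof. by case: i => [[|[|[|//]]] lt_i]; [left | right; left | right; right]; apply: val_inj. Qed.

Section Mt.
Variables (R : realType) (w t : complex R) (n : nat).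
Hypotheses (w_prim : 3.-primitive_root w) (t_neq0 : t != 0) (nt_prim : n.-primitive_root (- t)).
Local Notation G := (M_rels w t).
Local Notation word := (@word R).
Local Notation "a ≡ b" := (eqmod G a b) (at level 70, no associativity).

Lemma M_rels_square i : in_ideal G (gen R i * gen R i).
Proof.
apply: ideal_gen; rewrite /M_rels /vx /vy /vz.
by case: (ord3_cases i) => [|[|]] ->; [left | right; left | right; right; left].
Qed.

(* [twisted 2 0 1], [twisted 0 1 2], [twisted 1 2 0] are zxy + t yxz, xyz + t zyx, yzx + t xzy;
   g_t and the two relators of T_t are their discrete Fourier transforms in w. *)
Let twisted i j k := word [:: i; j; k] + t *: word [:: k; j; i].

Lemma word3 i j k : word [:: i; j; k] = gen R i * gen R j * gen R k.
Proof. by rewrite 2!word_cons word1 mulrA. Qed.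

Lemma rel_g_twisted : rel_g t = twisted 2 0 1 + twisted 0 1 2 + twisted 1 2 0.
Proof. by rewrite /twisted !word3; apply: rel_g_shape. Qed.

Lemma rel_f1_twisted :
  rel_f1 w t = twisted 2 0 1 + w *: twisted 0 1 2 + w ^+ 2 *: twisted 1 2 0.
Proof. by rewrite /twisted !word3; apply: rel_f_shape. Qed.

Lemma rel_f2_twisted :
  rel_f2 w t = twisted 2 0 1 + w ^+ 2 *: twisted 0 1 2 + w *: twisted 1 2 0.
Proof. by rewrite /twisted !word3; apply: rel_f_shape. Qed.

Lemma M_rels_twisted : [/\ in_ideal G (twisted 2 0 1), in_ideal G (twisted 0 1 2)
  & in_ideal G (twisted 1 2 0)].
Proof.
apply: (cube_root_components w_prim (S := in_ideal G)) => [u v|k u|||].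
- exact: ideal_add.
- exact: in_idealZ.
- by apply: ideal_gen; do 5 right; rewrite rel_g_twisted.
- by apply: ideal_gen; do 3 right; left; rewrite rel_f1_twisted.
- by apply: ideal_gen; do 4 right; left; rewrite rel_f2_twisted.
Qed.

Lemma twisted_eqmod i j k : in_ideal G (twisted i j k) ->
  word [:: i; j; k] ≡ - t *: word [:: k; j; i] /\
  word [:: k; j; i] ≡ (- t)^-1 *: word [:: i; j; k].
Proof.
move=> Itw; rewrite /eqmod; split; first by rewrite scaleNr opprK.
suff -> : word [:: k; j; i] - (- t)^-1 *: word [:: i; j; k] = t^-1 *: twisted i j k.
  exact: in_idealZ.
by rewrite /twisted scalerDr scalerA mulVf // scale1r invrN scaleNr opprK addrC.
Qed.

Lemma M_rels_rev a b c : a != b -> b != c -> a != c ->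
  exists2 k, k ^+ n = 1 & word [:: a; b; c] ≡ k *: word [:: c; b; a].
Proof.
have [I201 I012 I120] := M_rels_twisted.
have q_n : (- t) ^+ n = 1 := prim_expr_order nt_prim.
have qV_n : (- t)^-1 ^+ n = 1 by rewrite exprVn q_n invr1.
case: (ord3_cases a) => [|[|]] ->; case: (ord3_cases b) => [|[|]] ->;
  case: (ord3_cases c) => [|[|]] -> // _ _ _.
- by exists (- t); last exact: (twisted_eqmod I012).1.
- by exists (- t)^-1; last exact: (twisted_eqmod I120).2.
- by exists (- t)^-1; last exact: (twisted_eqmod I201).2.
- by exists (- t); last exact: (twisted_eqmod I120).1.
- by exists (- t); last exact: (twisted_eqmod I201).1.
- by exists (- t)^-1; last exact: (twisted_eqmod I012).2.
Qed.
End Mt.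

Theorem mainTheorem13 (R : realType) (w t : complex R) (n : nat) :
  3.-primitive_root w ->
  t != 0 ->
  n.-primitive_root (- t) ->
  quotient_finite_over_center (M_rels w t).
Proof.
move=> w_prim t_neq0 nt_prim.
apply: (word_relations_finite_over_center (n := n)).
- exact: prim_order_gt0 nt_prim.
- exact: M_rels_square.
- exact: M_rels_rev.
Qed.
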